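(* Let $\mathcal G\subseteq\{1,\ldots,n\}^2$ satisfy $(i,j)\in\mathcal G\iff(j,i)\in\mathcal G$, and let $1\leq N\leq|\{(i,j)\in\mathcal G: i\leq j\}|$. Define the deviation $d_{ij}$ either as the absolute deviation $|[P_k]_{ij}-[\tilde P_{k-1}]_{ij}|$ or as the relative deviation $|[P_k]_{ij}-[\tilde P_{k-1}]_{ij}|/|[\tilde P_{k-1}]_{ij}|$ (in the relative case assume $[\tilde P_{k-1}]_{ij}\neq0$ for $(i,j)\in\mathcal G$). Suppose that the index-value pairs of $\mathcal E_k$ with index in $\mathcal G$ and $i\leq j$ are exactly $N$ pairs such that $d_{ij}\geq d_{lm}$ whenever $(i,j)$ is one of them and $(l,m)\in\mathcal G$, $l\leq m$, is not; that $\mathcal E_k$ is symmetric (i.e. $((i,j),\cdot)\in\mathcal E_k\iff((j,i),\cdot)\in\mathcal E_k$); and that $\mathcal E_k$ may contain arbitrary further pairs with indices outside $\mathcal G$. For $(i,j)\in\mathcal G$ define $[\hat\Delta_k]_{ij}=0$ if $((i,j),\cdot)\in\mathcal E_k$, and otherwise $[\hat\Delta_k]_{ij}=\min_{((l,m),\cdot)\in\mathcal E_k,\,(l,m)\in\mathcal G}|[\tilde P_k]_{lm}-[\tilde P_{k-1}]_{lm}|$ in the absolute case, respectively $$[\hat\Delta_k]_{ij}=|[\tilde P_k]_{ij}|\min_{((l,m),\cdot)\in\mathcal E_k,\,(l,m)\in\mathcal G}\frac{|[\tilde P_k]_{lm}-[\tilde P_{k-1}]_{lm}|}{|[\tilde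 P_{k-1}]_{lm}|}$$ in the relative case. Then $|[\Delta_k]_{ij}|\leq[\hat\Delta_k]_{ij}$ for all $(i,j)\in\mathcal G$.
   Context: Setting (event-triggered transmission): $\mathcal S_n$ is the set of real symmetric $n\times n$ matrices. At time step $k$ a covariance matrix $P_k$ (real symmetric positive semidefinite $n\times n$) and a buffer matrix $\tilde P_{k-1}\in\mathcal S_n$ are given. The event set $\mathcal E_k$ is a set of index-value pairs $((i,j),[P_k]_{ij})$, and $((i,j),\cdot)\in\mathcal E_k$ means some pair with index $(i,j)$ lies in $\mathcal E_k$. The updated buffer $\tilde P_k$ is defined by $[\tilde P_k]_{ij}=[P_k]_{ij}$ if $((i,j),\cdot)\in\mathcal E_k$ and $[\tilde P_k]_{ij}=[\tilde P_{k-1}]_{ij}$ otherwise. The buffer error is $\Delta_k=\tilde P_k-P_k$. *)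

From HB Require Import structures.
From mathcomp Require Import all_boot all_order all_algebra.
Set Implicit Arguments. Unset Strict Implicit. Unset Printing Implicit Defensive.
Import Order.TTheory GRing.Theory Num.Theory.
Local Open Scope ring_scope.

(* Minimum of f over a finite set A (value 0 if A is empty; only used on
   nonempty sets). *)
Definition setmin (T : finType) (R : realDomainType) (A : {set T}) (f : T -> R) : R :=
  if enum A is x :: _ then \big[Order.min/f x]_(y in A) f y else 0.

Definition psd (R : realFieldType) (n : nat) (P : 'M[R]_n) : Prop :=
  P^T = P /\ forall x : 'cV[R]_n, 0 <= (x^T *m P *m x) 0 0.

Definition buffer_update (R : realFieldType) (n : nat) (E : {set 'I_n * 'I_n})
    (P Pold : 'M[R]_n) : 'M[R]_n :=
  \matrix_(i, j) (if (i, j) \in E then P i j else Pold i j).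

Definition deviation (R : realFieldType) (n : nat) (rel : bool)
    (P Pold : 'M[R]_n) (p : 'I_n * 'I_n) : R :=
  if rel then `|P p.1 p.2 - Pold p.1 p.2| / `|Pold p.1 p.2|
  else `|P p.1 p.2 - Pold p.1 p.2|.

Definition hatDelta (R : realFieldType) (n : nat) (rel : bool)
    (G E : {set 'I_n * 'I_n}) (P Pold : 'M[R]_n) (i j : 'I_n) : R :=
  let Pt := buffer_update E P Pold in
  if (i, j) \in E then 0
  else if rel then
    `|Pt i j| * setmin (E :&: G)
        (fun q => `|Pt q.1 q.2 - Pold q.1 q.2| / `|Pold q.1 q.2|)
  else setmin (E :&: G) (fun q => `|Pt q.1 q.2 - Pold q.1 q.2|).

(* Outside the event set the buffer error is the current deviation of the
   unsent entry, and the events in G were chosen as the largest deviations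
   among the upper-triangular indices of G.  Since G, E, P and the old buffer
   are symmetric, every index pair can be reoriented to [i <= j] without
   changing its deviation, so the unsent deviation is below that of every sent
   entry of G, hence below their minimum, which is what [hatDelta] computes
   (after multiplying back by the old buffer value in the relative case). *)
From HB Require Import structures.
From mathcomp Require Import all_boot all_order all_algebra.
Set Implicit Arguments. Unset Strict Implicit. Unset Printing Implicit Defensive.
Import Order.TTheory GRing.Theory Num.Theory.
Local Open Scope ring_scope.

Lemma le_setmin (T : finType) (R : realDomainType) (A : {set T}) (f : T -> R)
    (c : R) :
  A != set0 -> (forall q, q \in A -> c <= f q) -> c <= setmin A f.
Proof.
move=> /set0Pn [x0 Ax0] lecf; rewrite /setmin.
have : x0 \in enum A by rewrite mem_enum.
case enumA: (enum A) => [|x s] //= _.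
apply: (big_ind (fun v => c <= v)).
- by apply: lecf; rewrite -mem_enum enumA mem_head.
- by move=> a b ca cb; rewrite le_min ca cb.
- exact: lecf.
Qed.

Definition symmetric_set (n : nat) (S : {set 'I_n * 'I_n}) :=
  forall i j : 'I_n, ((i, j) \in S) = ((j, i) \in S).

Lemma symmetric_setI (n : nat) (S T : {set 'I_n * 'I_n}) :
  symmetric_set S -> symmetric_set T -> symmetric_set (S :&: T).
Proof. by move=> symS symT i j; rewrite !inE symS symT. Qed.

Lemma symmetric_setD (n : nat) (S T : {set 'I_n * 'I_n}) :
  symmetric_set S -> symmetric_set T -> symmetric_set (S :\: T).
Proof. by move=> symS symT i j; rewrite !inE symS symT. Qed.

Section Deviation.

Variables (R : realFieldType) (n : nat) (rel : bool) (P Pold : 'M[R]_n).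
Hypotheses (symP : P^T = P) (symPold : Pold^T = Pold).

Lemma deviationC (a b : 'I_n) :
  deviation rel P Pold (b, a) = deviation rel P Pold (a, b).
Proof.
have Pba : P b a = P a b by rewrite -[in LHS]symP mxE.
have Poldba : Pold b a = Pold a b by rewrite -[in LHS]symPold mxE.
by rewrite /deviation /= Pba Poldba.
Qed.

Lemma deviation_upper (S : {set 'I_n * 'I_n}) (q : 'I_n * 'I_n) :
  symmetric_set S -> q \in S ->
  exists2 p, (p \in S) && (p.1 <= p.2)%N &
    deviation rel P Pold p = deviation rel P Pold q.
Proof.
case: q => a b symS Sab; case: (leqP a b) => [leab | /ltnW leba].
  by exists (a, b); rewrite ?Sab.
by exists (b, a); [rewrite -symS Sab | exact: deviationC].
Qed.

Lemma deviation_unsent_le_sent (G E : {set 'I_n * 'I_n}) (p q : 'I_n * 'I_n) :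
  symmetric_set G -> symmetric_set E ->
  (forall p q, p \in E :&: G -> (p.1 <= p.2)%N ->
     q \in G -> (q.1 <= q.2)%N -> q \notin E ->
     deviation rel P Pold q <= deviation rel P Pold p) ->
  p \in G :\: E -> q \in E :&: G ->
  deviation rel P Pold p <= deviation rel P Pold q.
Proof.
move=> symG symE top_sent GEp EGq.
have [p' /andP [GEp' lep'] <-] := deviation_upper (symmetric_setD symG symE) GEp.
have [q' /andP [EGq' leq'] <-] := deviation_upper (symmetric_setI symE symG) EGq.
by move: GEp'; rewrite inE => /andP [Ep' Gp']; apply: top_sent.
Qed.

End Deviation.

Section BufferUpdate.

Variables (R : realFieldType) (n : nat) (E : {set 'I_n * 'I_n}).
Variables (P Pold : 'M[R]_n) (i j : 'I_n).

Lemma buffer_update_sent : (i, j) \in E -> buffer_update E P Pold i j = P i j.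
Proof. by rewrite mxE => ->. Qed.

Lemma buffer_update_unsent :
  (i, j) \notin E -> buffer_update E P Pold i j = Pold i j.
Proof. by rewrite mxE => /negPf ->. Qed.

Lemma buffer_error_sent : (i, j) \in E -> (buffer_update E P Pold - P) i j = 0.
Proof. by rewrite !mxE => ->; rewrite subrr. Qed.

Lemma buffer_error_unsent :
  (i, j) \notin E -> (buffer_update E P Pold - P) i j = Pold i j - P i j.
Proof. by rewrite !mxE => /negPf ->. Qed.

End BufferUpdate.

Theorem mainTheorem8 (R : realFieldType) (n : nat) (rel : bool)
    (G : {set 'I_n * 'I_n}) (N : nat) (P Pold : 'M[R]_n)
    (E : {set 'I_n * 'I_n}) :
  (forall i j : 'I_n, ((i, j) \in G) = ((j, i) \in G)) ->
  (1 <= N)%N ->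
  (N <= #|[set p in G | (p.1 <= p.2)%N]|)%N ->
  psd P ->
  Pold^T = Pold ->
  (rel -> forall p, p \in G -> Pold p.1 p.2 != 0) ->
  #|[set p in E :&: G | (p.1 <= p.2)%N]| = N ->
  (forall p q, p \in E :&: G -> (p.1 <= p.2)%N ->
     q \in G -> (q.1 <= q.2)%N -> q \notin E ->
     deviation rel P Pold q <= deviation rel P Pold p) ->
  (forall i j : 'I_n, ((i, j) \in E) = ((j, i) \in E)) ->
  forall i j : 'I_n, (i, j) \in G ->
    `|(buffer_update E P Pold - P) i j| <= hatDelta rel G E P Pold i j.
Proof.
move=> symG N_gt0 _ [symP _] symPold Pold_neq0 cardN top_sent symE i j Gij.
have [Eij | nEij] := boolP ((i, j) \in E).
  by rewrite buffer_error_sent // normr0 /hatDelta Eij.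
rewrite buffer_error_unsent // distrC /hatDelta (negPf nEij).
have EG_neq0 : E :&: G != set0.
  apply: contraTneq N_gt0 => EG0.
  by rewrite -cardN EG0 (eq_card0 (A := [set _ in _ | _])) // => p; rewrite !inE.
have dev_le q : q \in E :&: G ->
    deviation rel P Pold (i, j) <= deviation rel P Pold q.
  by apply: deviation_unsent_le_sent => //; rewrite inE nEij.
have buf_EG q : q \in E :&: G ->
    buffer_update E P Pold q.1 q.2 = P q.1 q.2.
  by rewrite inE => /andP [Eq _]; apply: buffer_update_sent; case: q Eq.
case: rel Pold_neq0 top_sent dev_le => Pold_neq0 _ dev_le.
- have Poldij_neq0 : `|Pold i j| != 0 by rewrite normr_eq0 (Pold_neq0 _ (i, j)).
  rewrite buffer_update_unsent // -[X in X <= _](divfK Poldij_neq0).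
  rewrite [X in X <= _]mulrC; apply: ler_wpM2l => //.
  by apply: le_setmin => // q EGq; rewrite buf_EG //; apply: dev_le.
- by apply: le_setmin => // q EGq; rewrite buf_EG //; apply: dev_le.
Qed.
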